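(* Let $(G_n)_{n\in\mathbb N}$ be a sequence of topological groups, each metrized by a left-invariant distance $d_n$ inducing its topology, and let $p\in[1,\infty)$. Then $\ell_p((G_n)_n):=\{(x_n)_n: x_n\in G_n,\ \sum_n d_n(x_n,e_{G_n})^p<\infty\}$, with componentwise multiplication $(x_n)_n\cdot(y_n)_n=(x_ny_n)_n$ and the distance $d((x_n)_n,(y_n)_n)=\big(\sum_n d_n(x_n,y_n)^p\big)^{1/p}$, is a topological group. *)

From Stdlib Require Import Reals Lra ClassicalEpsilon.
Open Scope R_scope.

Definition is_metric {X : Type} (d : X -> X -> R) : Prop :=
  (forall x y, 0 <= d x y) /\
  (forall x y, d x y = 0 <-> x = y) /\
  (forall x y, d x y = d y x) /\
  (forall x y z, d x z <= d x y + d y z).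

(* A topological group whose topology is induced by a left-invariant metric:
   group laws, metric axioms, left invariance, and continuity of multiplication
   and inversion w.r.t. the metric topology (epsilon-delta). *)
Record MetricGroup := {
  carrier :> Type;
  gmul : carrier -> carrier -> carrier;
  ginv : carrier -> carrier;
  gone : carrier;
  gdist : carrier -> carrier -> R;
  gmulA : forall x y z, gmul x (gmul y z) = gmul (gmul x y) z;
  gmul1l : forall x, gmul gone x = x;
  gmul1r : forall x, gmul x gone = x;
  gmulVl : forall x, gmul (ginv x) x = gone;
  gmulVr : forall x, gmul x (ginv x) = gone;
  gdist_metric : is_metric gdist;
  gdist_linv : forall g x y, gdist (gmul g x) (gmul g y) = gdist x y;
  gmul_cont : forall x y eps, 0 < eps -> exists delta, 0 < delta /\
     forall x' y', gdist x x' < delta -> gdist y y' < delta ->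
       gdist (gmul x y) (gmul x' y') < eps;
  ginv_cont : forall x eps, 0 < eps -> exists delta, 0 < delta /\
     forall x', gdist x x' < delta -> gdist (ginv x) (ginv x') < eps
}.

(* x^a for x >= 0, a > 0, with 0^a = 0. *)
Definition rpow (x a : R) : R := if Rle_dec x 0 then 0 else Rpower x a.

(* Sum of a convergent real series (chosen value if it diverges; only used
   for convergent series). *)
Definition series_sum (f : nat -> R) : R :=
  epsilon (inhabits 0) (fun s => infinite_sum f s).

Section Lp.
Variable G : nat -> MetricGroup.
Variable p : R.

Definition Prod := forall n, carrier (G n).

Definition pmul (x y : Prod) : Prod := fun n => gmul (G n) (x n) (y n).
Definition pinv (x : Prod) : Prod := fun n => ginv (G n) (x n).
Definition pone : Prod := fun n => gone (G n).

Definition in_lp (x : Prod) : Prop :=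
  exists s, infinite_sum (fun n => rpow (gdist (G n) (x n) (gone (G n))) p) s.

Definition lp_dist (x y : Prod) : R :=
  rpow (series_sum (fun n => rpow (gdist (G n) (x n) (y n)) p)) (1 / p).

Definition lp_is_topological_group : Prop :=
  in_lp pone /\
  (forall x y, in_lp x -> in_lp y -> in_lp (pmul x y)) /\
  (forall x, in_lp x -> in_lp (pinv x)) /\
  (forall x y, in_lp x -> in_lp y ->
     exists s, infinite_sum (fun n => rpow (gdist (G n) (x n) (y n)) p) s) /\
  (forall x y, in_lp x -> in_lp y -> 0 <= lp_dist x y) /\
  (forall x y, in_lp x -> in_lp y -> (lp_dist x y = 0 <-> x = y)) /\
  (forall x y, in_lp x -> in_lp y -> lp_dist x y = lp_dist y x) /\
  (forall x y z, in_lp x -> in_lp y -> in_lp z ->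
     lp_dist x z <= lp_dist x y + lp_dist y z) /\
  (forall x y eps, in_lp x -> in_lp y -> 0 < eps -> exists delta, 0 < delta /\
     forall x' y', in_lp x' -> in_lp y' ->
       lp_dist x x' < delta -> lp_dist y y' < delta ->
       lp_dist (pmul x y) (pmul x' y') < eps) /\
  (forall x eps, in_lp x -> 0 < eps -> exists delta, 0 < delta /\
     forall x', in_lp x' -> lp_dist x x' < delta ->
       lp_dist (pinv x) (pinv x') < eps).
End Lp.

From Stdlib Require Import Reals Lra Lia ClassicalEpsilon FunctionalExtensionality.
Open Scope R_scope.

(* The theorem reduces to properties of the l_p "norm"
   |a|_p = (sum_n a_n^p)^(1/p) of nonnegative real sequences:
   - Minkowski's inequality: if 0 <= c <= a + b termwise and a, b are in l_p,
     then c is in l_p and |c|_p <= |a|_p + |b|_p.  It is proved on partial sums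
     from the convexity of t |-> t^p (itself a consequence of Bernoulli's
     inequality), and passed to the limit by monotone convergence.
   - A continuity principle: if 0 <= r_z <= u + v_z termwise with u fixed in
     l_p, and each coordinate r_z(n) tends to 0 when v_z(n) does, then |r_z|_p
     tends to 0 when |v_z|_p does.  One cuts the sequences into a finite head,
     controlled coordinatewise, and a tail, controlled by the tail of u.
   Applied to d_n(x_n, y_n) and d_n(x_n, e), Minkowski gives that l_p is a
   subgroup of the product and that the distance is a metric; left invariance
   of d_n gives the termwise bounds feeding the continuity principle for
   multiplication and inversion. *)

Lemma rpow_ge0 x a : 0 <= rpow x a.
Proof. unfold rpow; destruct (Rle_dec x 0). lra. unfold Rpower; left; apply exp_pos. Qed.

Lemma rpow_Rpower x a : 0 < x -> rpow x a = Rpower x a.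
Proof. intros; unfold rpow; destruct (Rle_dec x 0); lra. Qed.

Lemma rpow_0 a : rpow 0 a = 0.
Proof. unfold rpow; destruct (Rle_dec 0 0); lra. Qed.

Lemma rpow_gt0 x a : 0 < x -> 0 < rpow x a.
Proof. intros; rewrite rpow_Rpower; auto; unfold Rpower; apply exp_pos. Qed.

Lemma rpow_le a x y : 0 < a -> 0 <= x <= y -> rpow x a <= rpow y a.
Proof.
  intros Ha [[Hx|Hx] Hxy].
  - rewrite !rpow_Rpower by lra. apply Rle_Rpower_l; lra.
  - subst. rewrite rpow_0. apply rpow_ge0.
Qed.

Lemma rpow_lt a x y : 0 < a -> 0 <= x < y -> rpow x a < rpow y a.
Proof.
  intros Ha [[Hx|Hx] Hxy].
  - rewrite !rpow_Rpower by lra. apply Rlt_Rpower_l; lra.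
  - subst. rewrite rpow_0. apply rpow_gt0; lra.
Qed.

Lemma rpow_rpow_1 a b x : a * b = 1 -> 0 <= x -> rpow (rpow x a) b = x.
Proof.
  intros Hab [Hx|Hx].
  - rewrite (rpow_Rpower x), rpow_Rpower by (try unfold Rpower; try apply exp_pos; lra).
    rewrite Rpower_mult, Hab. apply Rpower_1; lra.
  - subst. rewrite !rpow_0. reflexivity.
Qed.

Lemma rpow_root p x : 0 < p -> 0 <= x -> rpow (rpow x p) (1/p) = x.
Proof. intros Hp; apply rpow_rpow_1; field; lra. Qed.

Lemma rpow_root' p x : 0 < p -> 0 <= x -> rpow (rpow x (1/p)) p = x.
Proof. intros Hp; apply rpow_rpow_1; field; lra. Qed.

Lemma rpow_mul a c x : 0 <= c -> 0 <= x -> rpow (c * x) a = rpow c a * rpow x a.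
Proof.
  intros [Hc|Hc] [Hx|Hx]; subst; rewrite ?Rmult_0_r, ?Rmult_0_l, ?rpow_0; try ring.
  rewrite !rpow_Rpower by nra. symmetry; apply Rpower_mult_distr; lra.
Qed.

Lemma rpow_inv_mul A p : 0 < A -> rpow (/A) p * rpow A p = 1.
Proof.
  intros HA. rewrite <- rpow_mul by (try apply Rlt_le, Rinv_0_lt_compat; lra).
  rewrite Rinv_l, rpow_Rpower by lra. unfold Rpower; rewrite ln_1, Rmult_0_r; apply exp_0.
Qed.

Lemma bernoulli_rpow p t : 1 <= p -> 0 <= t -> 1 + p * (t - 1) <= rpow t p.
Proof.
  intros Hp [Ht|Ht].
  - rewrite rpow_Rpower by lra. unfold Rpower.
    replace (p * ln t) with (ln t + (p - 1) * ln t) by ring.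
    rewrite exp_plus, exp_ln by lra.
    pose proof (exp_ineq1_le ((p - 1) * ln t)) as Hexp.
    pose proof (exp_ineq1_le (ln (/ t))) as Hinv.
    rewrite exp_ln, ln_Rinv in Hinv by (try apply Rinv_0_lt_compat; lra).
    assert (Htln : t * ln t >= t - 1).
    { assert (t * (1 - ln t) <= t * / t) by (apply Rmult_le_compat_l; lra).
      rewrite Rinv_r in H by lra. lra. }
    assert (t * (1 + (p - 1) * ln t) <= t * exp ((p - 1) * ln t))
      by (apply Rmult_le_compat_l; lra).
    nra.
  - subst. rewrite rpow_0. lra.
Qed.

(* Convexity of t |-> t^p on [0, +oo) for p >= 1: the graph lies above its
   tangent at z = lam x + (1 - lam) y, a rescaling of Bernoulli's inequality. *)
Lemma rpow_convex p lam x y : 1 <= p -> 0 <= lam <= 1 -> 0 <= x -> 0 <= y ->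
  rpow (lam * x + (1 - lam) * y) p <= lam * rpow x p + (1 - lam) * rpow y p.
Proof.
  intros Hp Hl Hx Hy. set (z := lam * x + (1 - lam) * y).
  pose proof (rpow_ge0 x p). pose proof (rpow_ge0 y p).
  assert (Hz : 0 <= z) by (unfold z; nra).
  destruct Hz as [Hz|Hz]; [|rewrite <- Hz, rpow_0; nra].
  set (K := rpow z p).
  assert (HzK : rpow (/ z) p * K = 1) by (apply rpow_inv_mul; lra).
  assert (Htangent : forall u, 0 <= u -> K + K * p / z * u - K * p <= rpow u p).
  { intros u Hu.
    assert (Hzu : 0 <= / z * u) by (apply Rmult_le_pos; try apply Rlt_le, Rinv_0_lt_compat; lra).
    pose proof (bernoulli_rpow p (/ z * u) Hp Hzu) as Hb.
    rewrite rpow_mul in Hb by (try apply Rlt_le, Rinv_0_lt_compat; lra).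
    assert (HK : 0 <= K) by apply rpow_ge0.
    apply Rmult_le_compat_l with (r := K) in Hb; [|exact HK].
    replace (K * (rpow (/ z) p * rpow u p)) with (rpow (/ z) p * K * rpow u p) in Hb by ring.
    rewrite HzK in Hb. unfold Rdiv. nra. }
  pose proof (Htangent x Hx). pose proof (Htangent y Hy).
  assert (Hcomb : lam * (K + K * p / z * x - K * p) + (1 - lam) * (K + K * p / z * y - K * p) = K).
  { replace (lam * (K + K * p / z * x - K * p) + (1 - lam) * (K + K * p / z * y - K * p))
      with (K + K * p / z * z - K * p) by (unfold z; ring). field. lra. }
  assert (lam * (K + K * p / z * x - K * p) + (1 - lam) * (K + K * p / z * y - K * p)
          <= lam * rpow x p + (1 - lam) * rpow y p)
    by (apply Rplus_le_compat; apply Rmult_le_compat_l; lra).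
  lra.
Qed.

Definition nonneg (a : nat -> R) : Prop := forall n, 0 <= a n.
Definition summable (f : nat -> R) : Prop := exists s, infinite_sum f s.

Lemma nonneg_series_bounded f M : nonneg f -> (forall N, sum_f_R0 f N <= M) ->
  exists s, infinite_sum f s /\ s <= M.
Proof.
  intros Hf HM.
  assert (Hg : Un_growing (sum_f_R0 f)) by (intro n; simpl; pose proof (Hf (S n)); lra).
  assert (Hb : has_ub (sum_f_R0 f)) by (exists M; intros x [i ->]; apply HM).
  destruct (growing_cv _ Hg Hb) as [l Hl].
  exists l; split; [exact Hl|].
  apply Rnot_lt_le; intro Hlt.
  destruct (Hl (l - M)) as [N HN]; [lra|].
  specialize (HN N (Nat.le_refl N)). specialize (HM N).
  unfold Rdist in HN. apply Rabs_def2 in HN. lra.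
Qed.

Lemma partial_le_sum f s N : nonneg f -> infinite_sum f s -> sum_f_R0 f N <= s.
Proof. intros Hf Hs. apply sum_incr; auto. Qed.

Lemma term_le_sum f s n : nonneg f -> infinite_sum f s -> f n <= s.
Proof.
  intros Hf Hs. apply Rle_trans with (sum_f_R0 f n); [|apply partial_le_sum; auto].
  destruct n; simpl; [lra|]. pose proof (cond_pos_sum f n Hf). lra.
Qed.

Lemma sum_ge0 f s : nonneg f -> infinite_sum f s -> 0 <= s.
Proof. intros Hf Hs. apply Rle_trans with (f 0%nat); [apply Hf|]. apply term_le_sum; auto. Qed.

Lemma series_sum_eq f s : infinite_sum f s -> series_sum f = s.
Proof.
  intros Hs. unfold series_sum. apply (uniqueness_sum f); [|exact Hs].
  apply epsilon_spec. exists s; exact Hs.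
Qed.

Lemma finite_support_sum f N : (forall n, (N < n)%nat -> f n = 0) ->
  infinite_sum f (sum_f_R0 f N).
Proof.
  intros H e He. exists N. intros n Hn.
  assert (E : forall k, sum_f_R0 f (N + k) = sum_f_R0 f N).
  { induction k; [rewrite Nat.add_0_r; auto|].
    rewrite Nat.add_succ_r. simpl. rewrite IHk, H by lia. ring. }
  replace n with (N + (n - N))%nat by lia. rewrite E. unfold Rdist.
  rewrite Rminus_diag, Rabs_R0. lra.
Qed.

Definition powseq (p : R) (a : nat -> R) : nat -> R := fun n => rpow (a n) p.
Definition lp_norm (p : R) (a : nat -> R) : R := rpow (series_sum (powseq p a)) (1 / p).

Definition head (N : nat) (a : nat -> R) : nat -> R := fun n => if n <=? N then a n else 0.
Definition tail (N : nat) (a : nat -> R) : nat -> R := fun n => if n <=? N then 0 else a n.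

Lemma head_nonneg N a : nonneg a -> nonneg (head N a).
Proof. intros Ha n; unfold head; destruct (n <=? N); [apply Ha|lra]. Qed.

Lemma tail_nonneg N a : nonneg a -> nonneg (tail N a).
Proof. intros Ha n; unfold tail; destruct (n <=? N); [lra|apply Ha]. Qed.

Section LpNorm.
Variable p : R.
Hypothesis p_pos : 0 < p.

Lemma powseq_nonneg a : nonneg (powseq p a).
Proof. intro n; apply rpow_ge0. Qed.

Lemma lp_norm_ge0 a : 0 <= lp_norm p a.
Proof. apply rpow_ge0. Qed.

Lemma lp_norm_sum a s : infinite_sum (powseq p a) s -> lp_norm p a = rpow s (1 / p).
Proof. intros Hs. unfold lp_norm. rewrite (series_sum_eq _ s Hs). reflexivity. Qed.

Lemma partial_le_norm_pow a A N : summable (powseq p a) -> lp_norm p a <= A ->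
  sum_f_R0 (powseq p a) N <= rpow A p.
Proof.
  intros [s Hs] HA. rewrite (lp_norm_sum a s Hs) in HA.
  apply Rle_trans with s; [apply partial_le_sum; auto using powseq_nonneg|].
  rewrite <- (rpow_root' p s) by (eauto using sum_ge0, powseq_nonneg).
  apply rpow_le; auto. split; [apply rpow_ge0|exact HA].
Qed.

Lemma lp_norm_le_of_sum a s A : infinite_sum (powseq p a) s -> 0 <= A -> s <= rpow A p ->
  lp_norm p a <= A.
Proof.
  intros Hs HA Hle. rewrite (lp_norm_sum a s Hs), <- (rpow_root p A) by auto.
  apply rpow_le; [apply Rdiv_lt_0_compat; lra|]. split; eauto using sum_ge0, powseq_nonneg.
Qed.

Lemma term_le_norm a n : nonneg a -> summable (powseq p a) -> a n <= lp_norm p a.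
Proof.
  intros Ha [s Hs]. rewrite (lp_norm_sum a s Hs), <- (rpow_root p (a n)) by auto.
  apply rpow_le; [apply Rdiv_lt_0_compat; lra|].
  split; [apply rpow_ge0|]. apply (term_le_sum (powseq p a)); auto using powseq_nonneg.
Qed.

Lemma lp_norm_mono a c : nonneg c -> summable (powseq p a) -> (forall n, c n <= a n) ->
  summable (powseq p c) /\ lp_norm p c <= lp_norm p a.
Proof.
  intros Hc [s Hs] Hca.
  assert (Hpow : forall n, powseq p c n <= powseq p a n) by (intro n; apply rpow_le; auto).
  destruct (nonneg_series_bounded (powseq p c) s) as [s' [Hs' Hle]].
  - apply powseq_nonneg.
  - intro N. apply Rle_trans with (sum_f_R0 (powseq p a) N); [apply sum_Rle; auto|].
    apply partial_le_sum; auto using powseq_nonneg.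
  - split; [exists s'; exact Hs'|].
    rewrite (lp_norm_sum c s' Hs'), (lp_norm_sum a s Hs).
    apply rpow_le; [apply Rdiv_lt_0_compat; lra|]. split; eauto using sum_ge0, powseq_nonneg.
Qed.

Lemma lp_norm_zero a : (forall n, a n = 0) -> summable (powseq p a) /\ lp_norm p a = 0.
Proof.
  intros Ha.
  assert (Hs : infinite_sum (powseq p a) 0).
  { assert (Hpow : forall n, powseq p a n = 0) by (intro n; unfold powseq; rewrite Ha; apply rpow_0).
    assert (H0 : sum_f_R0 (powseq p a) 0 = 0) by (simpl; apply Hpow).
    rewrite <- H0. apply finite_support_sum. intros n _. apply Hpow. }
  split; [exists 0; exact Hs|]. rewrite (lp_norm_sum a 0 Hs). apply rpow_0.
Qed.

Lemma lp_norm_single k v : 0 <= v ->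
  summable (powseq p (fun n => if n =? k then v else 0)) /\
  lp_norm p (fun n => if n =? k then v else 0) = v.
Proof.
  intros Hv. set (e := fun n => if n =? k then v else 0).
  assert (He : forall n, n <> k -> powseq p e n = 0).
  { intros n Hn. unfold powseq, e. destruct (Nat.eqb_spec n k); [lia|apply rpow_0]. }
  assert (Hs : infinite_sum (powseq p e) (rpow v p)).
  { replace (rpow v p) with (sum_f_R0 (powseq p e) k).
    - apply finite_support_sum. intros n Hn. apply He. lia.
    - destruct k; simpl; [unfold powseq, e; reflexivity|].
      rewrite sum_eq_R0 by (intros i Hi; apply He; lia).
      unfold powseq, e. rewrite Nat.eqb_refl. ring. }
  split; [exists (rpow v p); exact Hs|]. rewrite (lp_norm_sum e _ Hs). apply rpow_root; auto.
Qed.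

Lemma tail_partial_sum f N n :
  sum_f_R0 (tail N f) n = if n <=? N then 0 else sum_f_R0 f n - sum_f_R0 f N.
Proof.
  induction n.
  - unfold tail; simpl. destruct (Nat.leb_spec 0 N); [auto|lia].
  - rewrite !tech5, IHn. unfold tail.
    destruct (Nat.leb_spec n N); destruct (Nat.leb_spec (S n) N); try lia; try ring.
    assert (n = N) by lia. subst. ring.
Qed.

Lemma tail_small u eps : nonneg u -> summable (powseq p u) -> 0 < eps ->
  exists N, summable (powseq p (tail N u)) /\ lp_norm p (tail N u) < eps.
Proof.
  intros Hu [s Hs] He.
  assert (Hep : 0 < rpow eps p) by (apply rpow_gt0; auto).
  destruct (Hs (rpow eps p) Hep) as [N HN]. specialize (HN N (Nat.le_refl N)).
  unfold Rdist in HN. apply Rabs_def2 in HN.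
  assert (Hpow : powseq p (tail N u) = tail N (powseq p u)).
  { apply functional_extensionality; intro n. unfold powseq, tail.
    destruct (n <=? N); [apply rpow_0|reflexivity]. }
  assert (Hbd : forall n, sum_f_R0 (powseq p (tail N u)) n <= s - sum_f_R0 (powseq p u) N).
  { intro n. rewrite Hpow, tail_partial_sum.
    pose proof (partial_le_sum (powseq p u) s n (powseq_nonneg u) Hs).
    pose proof (partial_le_sum (powseq p u) s N (powseq_nonneg u) Hs).
    destruct (n <=? N); lra. }
  destruct (nonneg_series_bounded _ _ (powseq_nonneg (tail N u)) Hbd) as [t [Ht Htle]].
  exists N. split; [exists t; exact Ht|].
  rewrite (lp_norm_sum _ t Ht), <- (rpow_root p eps) by lra.
  apply rpow_lt; [apply Rdiv_lt_0_compat; lra|]. split; eauto using sum_ge0, powseq_nonneg. lra.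
Qed.

End LpNorm.

Section Minkowski.
Variable p : R.
Hypothesis p_ge1 : 1 <= p.
Let p_pos : 0 < p := Rlt_le_trans 0 1 p Rlt_0_1 p_ge1.

(* Pointwise form of Minkowski's inequality: with lam = A / (A + B),
   (a + b)^p <= (A + B)^p (lam (a/A)^p + (1 - lam) (b/B)^p), by convexity. *)
Lemma minkowski_pointwise A B a b : 0 < A -> 0 < B -> 0 <= a -> 0 <= b ->
  rpow (a + b) p <= rpow (A + B) p *
    (A / (A + B) * rpow (/ A) p * rpow a p + (1 - A / (A + B)) * rpow (/ B) p * rpow b p).
Proof.
  intros HA HB Ha Hb. set (lam := A / (A + B)).
  assert (Hl : 0 <= lam <= 1).
  { unfold lam; split; [apply Rlt_le, Rdiv_lt_0_compat; lra|].
    apply Rmult_le_reg_r with (A + B); [lra|].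
    unfold Rdiv. rewrite Rmult_assoc, Rinv_l by lra. lra. }
  assert (HAa : 0 <= / A * a) by (apply Rmult_le_pos; [apply Rlt_le, Rinv_0_lt_compat|]; lra).
  assert (HBb : 0 <= / B * b) by (apply Rmult_le_pos; [apply Rlt_le, Rinv_0_lt_compat|]; lra).
  assert (E : a + b = (A + B) * (lam * (/ A * a) + (1 - lam) * (/ B * b)))
    by (unfold lam; field; lra).
  rewrite E, rpow_mul by nra.
  pose proof (rpow_convex p lam (/ A * a) (/ B * b) p_ge1 Hl HAa HBb) as Hconv.
  rewrite !rpow_mul in Hconv by (try apply Rlt_le, Rinv_0_lt_compat; lra).
  apply Rmult_le_compat_l with (r := rpow (A + B) p) in Hconv; [|apply rpow_ge0].
  lra.
Qed.

Lemma minkowski_partial a b A B N : nonneg a -> nonneg b -> 0 < A -> 0 < B ->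
  sum_f_R0 (powseq p a) N <= rpow A p -> sum_f_R0 (powseq p b) N <= rpow B p ->
  sum_f_R0 (powseq p (fun n => a n + b n)) N <= rpow (A + B) p.
Proof.
  intros Ha Hb HA HB HSa HSb.
  set (lam := A / (A + B)). set (K := rpow (A + B) p).
  set (Ka := K * lam * rpow (/ A) p). set (Kb := K * (1 - lam) * rpow (/ B) p).
  assert (Hterm : forall n, powseq p (fun n => a n + b n) n <= powseq p a n * Ka + powseq p b n * Kb).
  { intro n. unfold powseq, Ka, Kb, K, lam.
    pose proof (minkowski_pointwise A B (a n) (b n) HA HB (Ha n) (Hb n)). lra. }
  assert (Hlam : 0 < lam < 1).
  { unfold lam; split; [apply Rdiv_lt_0_compat; lra|].
    apply Rmult_lt_reg_r with (A + B); [lra|].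
    unfold Rdiv. rewrite Rmult_assoc, Rinv_l by lra. lra. }
  assert (HK : 0 <= K) by apply rpow_ge0.
  assert (HKa : 0 <= Ka) by (unfold Ka; pose proof (rpow_ge0 (/ A) p); apply Rmult_le_pos; nra).
  assert (HKb : 0 <= Kb) by (unfold Kb; pose proof (rpow_ge0 (/ B) p); apply Rmult_le_pos; nra).
  assert (Hsum : Ka * rpow A p + Kb * rpow B p = K).
  { unfold Ka, Kb.
    replace (K * lam * rpow (/ A) p * rpow A p) with (K * lam * (rpow (/ A) p * rpow A p)) by ring.
    replace (K * (1 - lam) * rpow (/ B) p * rpow B p) with (K * (1 - lam) * (rpow (/ B) p * rpow B p)) by ring.
    rewrite !rpow_inv_mul by lra. ring. }
  apply Rle_trans with (sum_f_R0 (fun n => powseq p a n * Ka + powseq p b n * Kb) N);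
    [apply sum_Rle; auto|].
  rewrite sum_plus, <- !scal_sum.
  pose proof (Rmult_le_compat_l Ka _ _ HKa HSa). pose proof (Rmult_le_compat_l Kb _ _ HKb HSb).
  fold K. lra.
Qed.

Lemma minkowski a b c : nonneg a -> nonneg b -> nonneg c ->
  summable (powseq p a) -> summable (powseq p b) -> (forall n, c n <= a n + b n) ->
  summable (powseq p c) /\ lp_norm p c <= lp_norm p a + lp_norm p b.
Proof.
  intros Ha Hb Hc Sa Sb Hcab.
  pose proof (lp_norm_ge0 p a). pose proof (lp_norm_ge0 p b).
  assert (Hbound : forall A B, lp_norm p a < A -> lp_norm p b < B -> forall N,
            sum_f_R0 (powseq p c) N <= rpow (A + B) p).
  { intros A B HA HB N.
    apply Rle_trans with (sum_f_R0 (powseq p (fun n => a n + b n)) N).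
    - apply sum_Rle. intros n _. apply rpow_le; auto.
    - apply minkowski_partial; auto; try lra; apply partial_le_norm_pow; auto; lra. }
  destruct (nonneg_series_bounded (powseq p c) (rpow (lp_norm p a + 1 + (lp_norm p b + 1)) p))
    as [s [Hs _]]; [apply powseq_nonneg|apply Hbound; lra|].
  split; [exists s; exact Hs|].
  apply Rle_plus_epsilon. intros e He.
  replace (lp_norm p a + lp_norm p b + e) with (lp_norm p a + e / 2 + (lp_norm p b + e / 2)) by field.
  destruct (nonneg_series_bounded (powseq p c) (rpow (lp_norm p a + e / 2 + (lp_norm p b + e / 2)) p))
    as [s' [Hs' Hle]]; [apply powseq_nonneg|apply Hbound; lra|].
  apply (lp_norm_le_of_sum p p_pos c s'); auto. lra.
Qed.

Lemma finite_support_norm N eta h : nonneg h -> (forall n, (N <= n)%nat -> h n = 0) ->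
  (forall n, h n <= eta) -> 0 <= eta ->
  summable (powseq p h) /\ lp_norm p h <= INR N * eta.
Proof.
  revert h. induction N as [|N IHN]; intros h Hh Hsupp Hle Heta.
  - destruct (lp_norm_zero p h) as [S Z]; [intro n; apply Hsupp; lia|].
    simpl. rewrite Z. split; [exact S|lra].
  - set (a := fun n => if n <? N then h n else 0).
    set (b := fun n => if n =? N then h N else 0).
    assert (Ha : nonneg a) by (intro n; unfold a; destruct (n <? N); [apply Hh|lra]).
    assert (Hb : nonneg b) by (intro n; unfold b; destruct (n =? N); [apply Hh|lra]).
    destruct (IHN a Ha) as [Sa Na]; auto.
    { intros n Hn. unfold a. destruct (Nat.ltb_spec n N); [lia|auto]. }
    { intros n. unfold a. destruct (n <? N); [apply Hle|lra]. }
    destruct (lp_norm_single p p_pos N (h N) (Hh N)) as [Sb Nb].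
    destruct (minkowski a b h Ha Hb Hh Sa Sb) as [S Nh].
    { intro n. unfold a, b. pose proof (Hh n).
      destruct (Nat.ltb_spec n N); destruct (Nat.eqb_spec n N); subst; try lia; try lra.
      rewrite Hsupp by lia. lra. }
    split; [exact S|]. fold b in Nb. rewrite S_INR. pose proof (Hle N). lra.
Qed.

Lemma common_modulus {X : Type} (r v : X -> nat -> R) eta :
  (forall n, exists d, 0 < d /\ forall z, v z n < d -> r z n < eta) ->
  forall M, exists d, 0 < d /\ forall n z, (n < M)%nat -> v z n < d -> r z n < eta.
Proof.
  intros H M. induction M as [|M [d [Hd Hd']]].
  - exists 1. split; [lra|intros; lia].
  - destruct (H M) as [d2 [Hd2 Hd2']].
    exists (Rmin d d2). split; [apply Rmin_pos; auto|].
    intros n z Hn Hv. pose proof (Rmin_l d d2). pose proof (Rmin_r d d2).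
    destruct (Nat.eq_dec n M); [subst; apply Hd2'; lra|apply Hd'; [lia|lra]].
Qed.

Lemma lp_continuity {X : Type} (u : nat -> R) (r v : X -> nat -> R) :
  nonneg u -> summable (powseq p u) ->
  (forall z, nonneg (r z)) -> (forall z, nonneg (v z)) ->
  (forall z n, r z n <= u n + v z n) ->
  (forall n eta, 0 < eta -> exists d, 0 < d /\ forall z, v z n < d -> r z n < eta) ->
  forall eps, 0 < eps -> exists d, 0 < d /\ forall z, summable (powseq p (v z)) ->
    lp_norm p (v z) < d -> summable (powseq p (r z)) /\ lp_norm p (r z) < eps.
Proof.
  intros Hu Su Hr Hv Hruv Hcoord eps He.
  destruct (tail_small p p_pos u (eps / 3)) as [N [Stu Ntu]]; auto; try lra.
  set (eta := eps / (3 * (INR N + 2))).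
  assert (HN : 0 <= INR N) by apply pos_INR.
  assert (Heta : 0 < eta) by (unfold eta; apply Rdiv_lt_0_compat; lra).
  assert (Hhead_small : INR (S N) * eta < eps / 3).
  { unfold eta. rewrite S_INR.
    replace ((INR N + 1) * (eps / (3 * (INR N + 2)))) with (eps / 3 * ((INR N + 1) / (INR N + 2)))
      by (field; lra).
    assert ((INR N + 1) / (INR N + 2) < 1).
    { apply Rmult_lt_reg_r with (INR N + 2); [lra|].
      unfold Rdiv. rewrite Rmult_assoc, Rinv_l by lra. lra. }
    assert (0 < eps / 3) by lra. nra. }
  destruct (common_modulus r v eta (fun n => Hcoord n eta Heta) (S N)) as [dh [Hdh Hdh']].
  exists (Rmin dh (eps / 3)). split; [apply Rmin_pos; lra|].
  intros z Svz Nvz. pose proof (Rmin_l dh (eps / 3)). pose proof (Rmin_r dh (eps / 3)).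
  destruct (finite_support_norm (S N) eta (head N (r z))) as [Sh Nh];
    [apply head_nonneg; auto| | |lra|].
  { intros n Hn. unfold head. destruct (Nat.leb_spec n N); [lia|auto]. }
  { intros n. unfold head. destruct (Nat.leb_spec n N); [|lra].
    left. apply Hdh'; [lia|].
    pose proof (term_le_norm p p_pos (v z) n (Hv z) Svz). lra. }
  destruct (minkowski (tail N u) (v z) (tail N (r z))) as [St Nt];
    auto using tail_nonneg.
  { intro n. unfold tail. destruct (n <=? N); [pose proof (Hv z n); lra|apply Hruv]. }
  destruct (minkowski (head N (r z)) (tail N (r z)) (r z)) as [Sr Nr];
    auto using head_nonneg, tail_nonneg.
  { intro n. unfold head, tail. destruct (n <=? N); lra. }
  split; [exact Sr|lra].
Qed.

End Minkowski.

Section MetricGroupFacts.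
Variable G : MetricGroup.

Lemma gdist_ge0 x y : 0 <= gdist G x y.
Proof. apply (proj1 (gdist_metric G)). Qed.

Lemma gdist_eq0 x y : gdist G x y = 0 <-> x = y.
Proof. apply (proj1 (proj2 (gdist_metric G))). Qed.

Lemma gdist_sym x y : gdist G x y = gdist G y x.
Proof. apply (proj1 (proj2 (proj2 (gdist_metric G)))). Qed.

Lemma gdist_triangle x y z : gdist G x z <= gdist G x y + gdist G y z.
Proof. apply (proj2 (proj2 (proj2 (gdist_metric G)))). Qed.

Lemma gdist_refl x : gdist G x x = 0.
Proof. apply gdist_eq0; reflexivity. Qed.

Lemma gdist_mul_r x y : gdist G (gmul G x y) x = gdist G y (gone G).
Proof. rewrite <- (gdist_linv G x y (gone G)), gmul1r. reflexivity. Qed.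

Lemma gdist_inv_one x : gdist G (ginv G x) (gone G) = gdist G x (gone G).
Proof. rewrite <- (gdist_linv G x (ginv G x) (gone G)), gmulVr, gmul1r. apply gdist_sym. Qed.

Lemma gdist_mul_one x y :
  gdist G (gmul G x y) (gone G) <= gdist G x (gone G) + gdist G y (gone G).
Proof. pose proof (gdist_triangle (gmul G x y) x (gone G)). rewrite gdist_mul_r in H. lra. Qed.

Lemma gdist_via_one x y : gdist G x y <= gdist G x (gone G) + gdist G y (gone G).
Proof. pose proof (gdist_triangle x (gone G) y). rewrite (gdist_sym (gone G) y) in H. lra. Qed.

(* Right multiplication is not an isometry, but moves distances by at most 2|y|. *)
Lemma gdist_mul_l_perturb x x' y :
  gdist G (gmul G x y) (gmul G x' y) <= 2 * gdist G y (gone G) + gdist G x x'.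
Proof.
  pose proof (gdist_triangle (gmul G x y) x (gmul G x' y)) as H1.
  pose proof (gdist_triangle x x' (gmul G x' y)) as H2.
  rewrite gdist_mul_r in H1. rewrite (gdist_sym x' (gmul G x' y)), gdist_mul_r in H2. lra.
Qed.

Lemma gdist_inv_perturb x x' :
  gdist G (ginv G x) (ginv G x') <= 2 * gdist G x (gone G) + gdist G x x'.
Proof.
  pose proof (gdist_triangle (ginv G x) (gone G) (ginv G x')) as H1.
  rewrite gdist_inv_one, (gdist_sym (gone G)), gdist_inv_one in H1.
  pose proof (gdist_triangle x' x (gone G)) as H2. rewrite (gdist_sym x' x) in H2. lra.
Qed.

End MetricGroupFacts.

Section LpGroup.
Variable G : nat -> MetricGroup.
Variable p : R.
Hypothesis p_ge1 : 1 <= p.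
Let p_pos : 0 < p := Rlt_le_trans 0 1 p Rlt_0_1 p_ge1.

Definition dseq (x y : Prod G) : nat -> R := fun n => gdist (G n) (x n) (y n).

Lemma dseq_nonneg x y : nonneg (dseq x y).
Proof. intro n; apply gdist_ge0. Qed.

Lemma in_lp_dseq x : in_lp G p x <-> summable (powseq p (dseq x (pone G))).
Proof. reflexivity. Qed.

Lemma lp_dist_dseq x y : lp_dist G p x y = lp_norm p (dseq x y).
Proof. reflexivity. Qed.

Lemma lp_dist_summable x y : in_lp G p x -> in_lp G p y -> summable (powseq p (dseq x y)).
Proof.
  intros Hx Hy. apply (minkowski p p_ge1 (dseq x (pone G)) (dseq y (pone G)));
    auto using dseq_nonneg.
  intro n; apply gdist_via_one.
Qed.

Lemma lp_one : in_lp G p (pone G).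
Proof.
  apply in_lp_dseq, (lp_norm_zero p). intro n; apply gdist_refl.
Qed.

Lemma lp_mul_closed x y : in_lp G p x -> in_lp G p y -> in_lp G p (pmul G x y).
Proof.
  intros Hx Hy.
  apply (minkowski p p_ge1 (dseq x (pone G)) (dseq y (pone G)) (dseq (pmul G x y) (pone G)));
    auto using dseq_nonneg.
  intro n; apply gdist_mul_one.
Qed.

Lemma lp_inv_closed x : in_lp G p x -> in_lp G p (pinv G x).
Proof.
  intros Hx. apply (lp_norm_mono p p_pos (dseq x (pone G)) (dseq (pinv G x) (pone G)));
    auto using dseq_nonneg.
  intro n. unfold dseq, pinv, pone. rewrite gdist_inv_one. lra.
Qed.

Lemma lp_dist_eq0 x y : in_lp G p x -> in_lp G p y -> (lp_dist G p x y = 0 <-> x = y).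
Proof.
  intros Hx Hy. rewrite lp_dist_dseq. split.
  - intros H0. apply functional_extensionality_dep. intro n. apply (gdist_eq0 (G n)).
    pose proof (term_le_norm p p_pos (dseq x y) n (dseq_nonneg x y) (lp_dist_summable x y Hx Hy)).
    pose proof (dseq_nonneg x y n). unfold dseq in *. lra.
  - intros <-. apply (lp_norm_zero p). intro n; apply gdist_refl.
Qed.

Lemma lp_dist_sym x y : in_lp G p x -> in_lp G p y -> lp_dist G p x y = lp_dist G p y x.
Proof.
  intros Hx Hy. rewrite !lp_dist_dseq.
  assert (Hxy : forall n, dseq x y n <= dseq y x n) by (intro n; unfold dseq; rewrite gdist_sym; lra).
  assert (Hyx : forall n, dseq y x n <= dseq x y n) by (intro n; unfold dseq; rewrite gdist_sym; lra).
  destruct (lp_norm_mono p p_pos _ _ (dseq_nonneg x y) (lp_dist_summable y x Hy Hx) Hxy).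
  destruct (lp_norm_mono p p_pos _ _ (dseq_nonneg y x) (lp_dist_summable x y Hx Hy) Hyx).
  lra.
Qed.

Lemma lp_dist_triangle x y z : in_lp G p x -> in_lp G p y -> in_lp G p z ->
  lp_dist G p x z <= lp_dist G p x y + lp_dist G p y z.
Proof.
  intros Hx Hy Hz. rewrite !lp_dist_dseq.
  apply (minkowski p p_ge1 (dseq x y) (dseq y z)); auto using dseq_nonneg, lp_dist_summable.
  intro n; apply gdist_triangle.
Qed.

Lemma lp_double x : in_lp G p x -> summable (powseq p (fun n => 2 * dseq x (pone G) n)).
Proof.
  intros Hx. apply (minkowski p p_ge1 (dseq x (pone G)) (dseq x (pone G)));
    auto using dseq_nonneg.
  - intro n; pose proof (dseq_nonneg x (pone G) n); lra.
  - intro n; lra.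
Qed.

Lemma lp_mul_continuous x y eps : in_lp G p x -> in_lp G p y -> 0 < eps ->
  exists delta, 0 < delta /\ forall x' y', in_lp G p x' -> in_lp G p y' ->
    lp_dist G p x x' < delta -> lp_dist G p y y' < delta ->
    lp_dist G p (pmul G x y) (pmul G x' y') < eps.
Proof.
  intros Hx Hy He.
  (* Moving x to x' with y fixed: coordinates of d(x y, x' y) are dominated by
     2|y_n| + d(x_n, x'_n) and tend to 0 by continuity of each gmul. *)
  destruct (lp_continuity p p_ge1 (fun n => 2 * dseq y (pone G) n)
              (fun x' n => gdist (G n) (gmul (G n) (x n) (y n)) (gmul (G n) (x' n) (y n)))
              (fun x' => dseq x x'))
    with (eps := eps / 2) as [d1 [Hd1 Hd1']].
  - intro n; pose proof (dseq_nonneg y (pone G) n); lra.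
  - apply lp_double; exact Hy.
  - intros z n; apply gdist_ge0.
  - intro z; apply dseq_nonneg.
  - intros z n; apply gdist_mul_l_perturb.
  - intros n eta Heta. destruct (gmul_cont (G n) (x n) (y n) eta Heta) as [d [Hd Hd']].
    exists d; split; auto. intros z Hz. apply Hd'; auto. rewrite gdist_refl; lra.
  - lra.
  - exists (Rmin d1 (eps / 2)). split; [apply Rmin_pos; lra|].
    intros x' y' Hx' Hy' Hdx Hdy. rewrite lp_dist_dseq in *.
    pose proof (Rmin_l d1 (eps / 2)). pose proof (Rmin_r d1 (eps / 2)).
    destruct (Hd1' x' (lp_dist_summable x x' Hx Hx')) as [Sr Nr]; [lra|].
    (* Then moving y to y' with x' fixed is an isometry by left invariance. *)
    destruct (minkowski p p_ge1 _ (dseq y y') (dseq (pmul G x y) (pmul G x' y'))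
                (fun n => gdist_ge0 _ _ _) (dseq_nonneg y y') (dseq_nonneg _ _) Sr
                (lp_dist_summable y y' Hy Hy')) as [_ Nm].
    { intro n. unfold dseq, pmul. rewrite <- (gdist_linv (G n) (x' n) (y n) (y' n)).
      apply gdist_triangle. }
    lra.
Qed.

Lemma lp_inv_continuous x eps : in_lp G p x -> 0 < eps ->
  exists delta, 0 < delta /\ forall x', in_lp G p x' -> lp_dist G p x x' < delta ->
    lp_dist G p (pinv G x) (pinv G x') < eps.
Proof.
  intros Hx He.
  destruct (lp_continuity p p_ge1 (fun n => 2 * dseq x (pone G) n)
              (fun x' n => gdist (G n) (ginv (G n) (x n)) (ginv (G n) (x' n)))
              (fun x' => dseq x x'))
    with (eps := eps) as [d [Hd Hd']].
  - intro n; pose proof (dseq_nonneg x (pone G) n); lra.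
  - apply lp_double; exact Hx.
  - intros z n; apply gdist_ge0.
  - intro z; apply dseq_nonneg.
  - intros z n; apply gdist_inv_perturb.
  - intros n eta Heta. destruct (ginv_cont (G n) (x n) eta Heta) as [d [Hd Hd']].
    exists d; split; [exact Hd|]. intros z Hz. apply Hd'; exact Hz.
  - exact He.
  - exists d. split; auto. intros x' Hx' Hdx. rewrite lp_dist_dseq in *.
    apply (Hd' x' (lp_dist_summable x x' Hx Hx') Hdx).
Qed.

End LpGroup.

Theorem mainTheorem16 (G : nat -> MetricGroup) (p : R) (hp : 1 <= p) :
  lp_is_topological_group G p.
Proof.
  unfold lp_is_topological_group.
  split; [exact (lp_one G p)|].
  split; [exact (lp_mul_closed G p hp)|].
  split; [exact (lp_inv_closed G p hp)|].
  split; [exact (lp_dist_summable G p hp)|].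
  split; [intros x y _ _; apply lp_norm_ge0|].
  split; [exact (lp_dist_eq0 G p hp)|].
  split; [exact (lp_dist_sym G p hp)|].
  split; [exact (lp_dist_triangle G p hp)|].
  split; [exact (lp_mul_continuous G p hp)|].
  exact (lp_inv_continuous G p hp).
Qed.
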